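(* Let $P(z)=z(2z^2-9z+12)$ and consider the system on $[0,\infty)\times[0,\infty)$ \[ \dot x=-x+5+\frac{1}{1+z^2},\qquad \dot z=-P(z)+x . \] Then every trajectory is defined and bounded on $[0,\infty)$, and the system has a unique equilibrium $(\bar x,\bar z)$, which is globally attractive: every trajectory converges to it. Here $\bar z>5/2$ is the unique fixed point on $[5/2,\infty)$ of the map $w\mapsto k_2(k_1(w))$, where $k_1(w)=5+\frac{1}{1+w^2}$ and $k_2(y)$ is the unique $z>5/2$ with $P(z)=y$ (for $y>5$), and $\bar x=k_1(\bar z)$. Moreover the set-valued map $k_2(y)=\{z\ge0:P(z)=y\}$, $y\ge0$, is single-valued for $y\in[0,4)\cup(5,\infty)$, triple-valued for $y\in(4,5)$, and $k_2(4)=\{1/2,2\}$, $k_2(5)=\{1,5/2\}$.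
   Context: This is the interconnection $\dot x=-x+5+w$, $y=x$; $\dot z=-P(z)+y$, $w=\frac{1}{1+z^2}$, written in closed form. *)

From Stdlib Require Import Reals.
From Coquelicot Require Import Coquelicot.
Open Scope R_scope.

Definition P (z : R) : R := z * (2 * z ^ 2 - 9 * z + 12).

Definition k1 (w : R) : R := 5 + / (1 + w ^ 2).

Definition fx (x z : R) : R := - x + 5 + / (1 + z ^ 2).
Definition fz (x z : R) : R := - P z + x.

Definition is_traj (x z : R -> R) : Prop :=
  forall t, 0 <= t ->
    is_derive x t (fx (x t) (z t)) /\ is_derive z t (fz (x t) (z t)).

Definition k2set (y z : R) : Prop := 0 <= z /\ P z = y.

(* for y > 5: k2(y) is the unique z > 5/2 with P z = y (relational form) *)
Definition k2rel (y z : R) : Prop := 5 / 2 < z /\ P z = y.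

(* Existence: outside a box [0, X] * [0, Z] the field is frozen into a globally Lipschitz and
   bounded one, for which Picard iteration converges on all of [0, +oo) in an exponentially
   weighted norm; the box is forward invariant, so the solution solves the original system.
   The same box bounds every trajectory.  Convergence: [x] eventually exceeds [5] by a fixed
   margin, which pushes [z] past [11/5], out of the region where [P <= 5] could hold it back;
   from then on [V = (x - xbar)^2 + (z - zbar)^2] satisfies [V' <= - V], because [P] is steep
   enough there to dominate the coupling through [1/(1+z^2)], whose slope is at most 1.
   The description of [k2] follows from [P - 4 = (z-2)^2 (2z-1)], [5 - P = (z-1)^2 (5-2z)] and
   the monotonicity of [P] on [0, 1] and [2, +oo). *)

From Stdlib Require Import Reals Lra Psatz Classical Lia.
From Coquelicot Require Import Coquelicot.
Open Scope R_scope.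

(** * Comparison principles *)

Lemma ex_derive_continuous_R (g : R -> R) t : ex_derive g t -> continuous g t.
Proof. exact (ex_derive_continuous (K := R_AbsRing) (V := R_NormedModule) g t). Qed.

Lemma ex_derive_continuity_pt (g : R -> R) t : ex_derive g t -> continuity_pt g t.
Proof. intros H. apply continuity_pt_filterlim, ex_derive_continuous_R, H. Qed.

Lemma lipschitz_continuous (f : R -> R) K :
  (forall u v, Rabs (f u - f v) <= K * Rabs (u - v)) -> forall t, continuous f t.
Proof.
  intros H t. apply continuity_pt_filterlim, continuity_pt_locally. intros eps.
  assert (HK : 0 < Rabs K + 1) by (pose proof (Rabs_pos K); lra).
  exists (mkposreal (eps / (Rabs K + 1)) (Rdiv_lt_0_compat _ _ (cond_pos eps) HK)).
  intros s Hs. change (Rabs (s - t) < eps / (Rabs K + 1)) in Hs.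
  pose proof (Rle_abs K). pose proof (Rabs_pos (s - t)).
  apply Rle_lt_trans with (1 := H s t).
  apply Rle_lt_trans with ((Rabs K + 1) * Rabs (s - t)); [nra|].
  replace (pos eps) with ((Rabs K + 1) * (eps / (Rabs K + 1))) by (field; lra).
  apply Rmult_lt_compat_l; lra.
Qed.

Lemma continuous_eps_delta (g : R -> R) m : continuous g m ->
  forall eps, 0 < eps -> exists d, 0 < d /\ forall s, Rabs (s - m) < d -> Rabs (g s - g m) < eps.
Proof.
  intros Hc eps He.
  destruct (proj1 (continuity_pt_locally g m) (proj2 (continuity_pt_filterlim g m) Hc)
              (mkposreal eps He)) as [d Hd].
  exists d. split; [apply cond_pos|]. intros s Hs. apply Hd, Hs.
Qed.

(* If [g] can only increase while it is below [c], it cannot cross [c] downwards: take the last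
   time [m] with [c <= g m] and apply the mean value theorem on [m, b]. *)
Lemma ge_preserved (g : R -> R) a b c : a <= b ->
  (forall t, a <= t <= b -> exists d, is_derive g t d /\ (g t < c -> 0 <= d)) ->
  c <= g a -> c <= g b.
Proof.
  intros Hab Hd Ha.
  assert (Hex : forall t, a <= t <= b -> ex_derive g t)
    by (intros t Ht; destruct (Hd t Ht) as [d [H _]]; exists d; exact H).
  assert (Hsg : forall t, a <= t <= b -> g t < c -> 0 <= Derive g t)
    by (intros t Ht Hl; destruct (Hd t Ht) as [d [H Hs]]; rewrite (is_derive_unique _ _ _ H); auto).
  destruct (Rle_lt_dec c (g b)) as [|Hb]; [assumption|exfalso].
  set (E := fun s => a <= s <= b /\ c <= g s).
  destruct (completeness E) as [m [Hub Hl]].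
  { exists b. intros s [Hs _]. lra. }
  { exists a. split; [lra|assumption]. }
  assert (Ham : a <= m) by (apply Hub; split; [lra|assumption]).
  assert (Hmb : m <= b) by (apply Hl; intros s [Hs _]; lra).
  assert (Hgm : c <= g m).
  { destruct (Rle_lt_dec c (g m)) as [|Hlt]; [assumption|exfalso].
    destruct (continuous_eps_delta g m (ex_derive_continuous_R _ _ (Hex m (conj Ham Hmb))) (c - g m))
      as [d [Hd0 Hdd]]; [lra|].
    destruct (classic (exists s, E s /\ m - d/2 < s)) as [[s [Es Hs]]|Hn].
    - assert (s <= m) by (apply Hub; exact Es).
      specialize (Hdd s ltac:(rewrite Rabs_left1; lra)).
      destruct Es as [_ Es]. apply Rabs_def2 in Hdd. lra.
    - assert (m <= m - d/2); [|lra]. apply Hl. intros s Es.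
      destruct (Rle_lt_dec s (m - d/2)); [assumption|]. exfalso; apply Hn; exists s; auto. }
  assert (Hmb' : m < b) by (destruct (Req_dec m b); [subst; lra|lra]).
  assert (Hafter : forall s, m < s <= b -> g s < c).
  { intros s Hs. destruct (Rlt_le_dec (g s) c); [assumption|].
    assert (s <= m) by (apply Hub; split; [lra|assumption]). lra. }
  destruct (MVT_gen g m b (fun x => Rmax 0 (Derive g x))) as [xi [Hxi Heq]].
  - intros x Hx. rewrite Rmin_left, Rmax_right in Hx by lra.
    rewrite Rmax_right; [apply Derive_correct, Hex; lra|].
    apply Hsg; [lra|]. apply Hafter; lra.
  - intros x Hx. rewrite Rmin_left, Rmax_right in Hx by lra.
    apply ex_derive_continuity_pt, Hex; lra.
  - assert (0 <= Rmax 0 (Derive g xi) * (b - m)) by (apply Rmult_le_pos; [apply Rmax_l|lra]).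
    lra.
Qed.

Lemma interval_invariant (g : R -> R) lo hi :
  (forall t, 0 <= t -> exists d, is_derive g t d /\ (g t < lo -> 0 <= d) /\ (hi < g t -> d <= 0)) ->
  lo <= g 0 <= hi -> forall t, 0 <= t -> lo <= g t <= hi.
Proof.
  intros Hd Hg0 t Ht. split.
  - apply (ge_preserved g 0 t lo Ht); [|lra].
    intros s Hs. destruct (Hd s ltac:(lra)) as [d [D [Hlo _]]]. eauto.
  - assert (- hi <= - g t); [|lra].
    apply (ge_preserved (fun s => - g s) 0 t (- hi) Ht); [|lra].
    intros s Hs. destruct (Hd s ltac:(lra)) as [d [D [_ Hhi]]].
    exists (- d). split; [apply (is_derive_opp g s d D)|]. intros Hl. specialize (Hhi ltac:(lra)). lra.
Qed.

Lemma eventually_ge (g : R -> R) a c eta : 0 < eta ->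
  (forall t, a <= t -> exists d, is_derive g t d /\ (g t < c -> eta <= d)) ->
  exists T, a <= T /\ forall t, T <= t -> c <= g t.
Proof.
  intros He Hd.
  destruct (classic (exists T, a <= T /\ c <= g T)) as [[T [HT1 HT2]]|Hn].
  - exists T. split; [assumption|]. intros t Ht.
    apply (ge_preserved g T t c Ht); [|assumption].
    intros s Hs. destruct (Hd s ltac:(lra)) as [d [D Hs']]. exists d. split; [exact D|].
    intros Hl. specialize (Hs' Hl). lra.
  - exfalso.
    assert (Hlt : forall t, a <= t -> g t < c).
    { intros t Ht. destruct (Rlt_le_dec (g t) c); [assumption|]. exfalso; apply Hn; exists t; auto. }
    set (b := a + (c - g a) / eta + 1).
    assert (Hga := Hlt a (Rle_refl a)).
    assert (Hb : a < b) by (unfold b; assert (0 < (c - g a) / eta) by (apply Rdiv_lt_0_compat; lra); lra).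
    assert (Hg : forall t, a <= t <= b -> is_derive g t (Derive g t) /\ eta <= Derive g t).
    { intros t Ht. destruct (Hd t ltac:(lra)) as [d [D Hs]].
      rewrite (is_derive_unique _ _ _ D). split; [exact D|]. apply Hs, Hlt; lra. }
    destruct (MVT_gen g a b (fun x => Rmax eta (Derive g x))) as [xi [Hxi Heq]].
    + intros x Hx. rewrite Rmin_left, Rmax_right in Hx by lra.
      rewrite Rmax_right; apply Hg; lra.
    + intros x Hx. rewrite Rmin_left, Rmax_right in Hx by lra.
      apply ex_derive_continuity_pt. exists (Derive g x). apply Hg; lra.
    + assert (eta * (b - a) <= Rmax eta (Derive g xi) * (b - a))
        by (apply Rmult_le_compat_r; [lra|apply Rmax_l]).
      assert (eta * (b - a) = c - g a + eta) by (unfold b; field; lra).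
      assert (Hgb := Hlt b ltac:(lra)). lra.
Qed.

Lemma is_derive_sqr_sub f t df c :
  is_derive f t df -> is_derive (fun s => (f s - c) ^ 2) t (2 * (f t - c) * df).
Proof.
  intros H.
  assert (H2 : is_derive (fun u => (u - c) ^ 2) (f t) (2 * (f t - c))) by (auto_derive; auto; ring).
  pose proof (is_derive_comp _ _ t _ _ H2 H) as H3.
  replace (2 * (f t - c) * df) with (scal df (2 * (f t - c))); [exact H3|].
  unfold scal; simpl; unfold mult; simpl. ring.
Qed.

(** * The cubic P and the map k2 *)

Definition P_slope (a b : R) : R := 2 * (a ^ 2 + a * b + b ^ 2) - 9 * (a + b) + 12.

Lemma P_sub a b : P a - P b = (a - b) * P_slope a b.
Proof. unfold P, P_slope; ring. Qed.

Lemma P_slope_sub a b c : P_slope a c - P_slope b c = (a - b) * (2 * (a + b + c) - 9).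
Proof. unfold P_slope; ring. Qed.

(* [P] has a local maximum [P 1 = 5] and a local minimum [P 2 = 4]. *)
Lemma five_sub_P z : 5 - P z = (z - 1) ^ 2 * (5 - 2 * z).
Proof. unfold P; ring. Qed.

Lemma P_sub_four z : P z - 4 = (z - 2) ^ 2 * (2 * z - 1).
Proof. unfold P; ring. Qed.

Lemma P_le_5 z : z <= 5 / 2 -> P z <= 5.
Proof. intros H. pose proof (five_sub_P z). pose proof (pow2_ge_0 (z - 1)). nra. Qed.

Lemma P_ge_4 z : 1 / 2 <= z -> 4 <= P z.
Proof. intros H. pose proof (P_sub_four z). pose proof (pow2_ge_0 (z - 2)). nra. Qed.

Lemma P_lt_0 z : z < 0 -> P z < 0.
Proof. intros H. unfold P. assert (0 < 2 * z ^ 2 - 9 * z + 12) by nra. nra. Qed.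

Lemma P_ge_3id z : 3 <= z -> 3 * z <= P z.
Proof.
  intros H. unfold P.
  assert (0 <= z * ((2 * z - 3) * (z - 3))) by (apply Rmult_le_pos; nra). nra.
Qed.

Lemma P_lt_ge2 a b : 2 <= a -> a < b -> P a < P b.
Proof.
  intros Ha Hab. assert (0 < P_slope b a) by (unfold P_slope; nra).
  pose proof (P_sub b a). nra.
Qed.

Lemma P_lt_01 a b : 0 <= a -> a < b -> b <= 1 -> P a < P b.
Proof.
  intros Ha Hab Hb. assert (0 < P_slope b a) by (unfold P_slope; nra).
  pose proof (P_sub b a). nra.
Qed.

Lemma P_continuous : continuity P.
Proof. unfold P. reg. Qed.

Lemma inv_1_sqr_pos z : 0 < / (1 + z ^ 2).
Proof. apply Rinv_0_lt_compat. pose proof (pow2_ge_0 z). lra. Qed.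

Lemma inv_1_sqr_le_1 z : / (1 + z ^ 2) <= 1.
Proof. pose proof (pow2_ge_0 z). rewrite <- Rinv_1. apply Rinv_le_contravar; lra. Qed.

Lemma inv_1_sqr_sub u w : 0 <= u -> 0 <= w ->
  exists al, 0 <= al <= 1 /\ / (1 + u ^ 2) - / (1 + w ^ 2) = - (u - w) * al.
Proof.
  intros Hu Hw. set (A := / (1 + u ^ 2)). set (B := / (1 + w ^ 2)).
  assert (HA : A * (1 + u ^ 2) = 1) by (unfold A; field; pose proof (pow2_ge_0 u); lra).
  assert (HB : B * (1 + w ^ 2) = 1) by (unfold B; field; pose proof (pow2_ge_0 w); lra).
  assert (HAp : 0 < A) by apply inv_1_sqr_pos. assert (HBp : 0 < B) by apply inv_1_sqr_pos.
  exists ((u + w) * A * B). split; [split|].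
  - apply Rmult_le_pos; [apply Rmult_le_pos|]; lra.
  - assert (Hp : (u + w) * A * B * ((1 + u ^ 2) * (1 + w ^ 2)) = u + w).
    { transitivity ((u + w) * (A * (1 + u ^ 2)) * (B * (1 + w ^ 2))); [ring|]. rewrite HA, HB; ring. }
    assert (u + w <= (1 + u ^ 2) * (1 + w ^ 2))
      by (pose proof (pow2_ge_0 (u - 1/2)); pose proof (pow2_ge_0 (w - 1/2));
          pose proof (pow2_ge_0 (u * w)); nra).
    assert (0 < (1 + u ^ 2) * (1 + w ^ 2)) by (pose proof (pow2_ge_0 u); pose proof (pow2_ge_0 w); nra).
    nra.
  - transitivity (A * (B * (1 + w ^ 2)) - (A * (1 + u ^ 2)) * B); [rewrite HA, HB; ring|ring].
Qed.

Lemma inv_1_sqr_lipschitz u w : 0 <= u -> 0 <= w ->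
  Rabs (/ (1 + u ^ 2) - / (1 + w ^ 2)) <= Rabs (u - w).
Proof.
  intros Hu Hw. destruct (inv_1_sqr_sub u w Hu Hw) as [al [Hal ->]].
  rewrite Rabs_mult, Rabs_Ropp, (Rabs_right al) by lra.
  pose proof (Rabs_pos (u - w)). nra.
Qed.

Lemma k1_continuous : continuity k1.
Proof. unfold k1. reg; intros w; pose proof (pow2_ge_0 w); lra. Qed.

Lemma k1_lt a b : 0 <= a -> a < b -> k1 b < k1 a.
Proof.
  intros Ha Hab. unfold k1. apply Rplus_lt_compat_l, Rinv_lt_contravar.
  - pose proof (pow2_ge_0 a); pose proof (pow2_ge_0 b); nra.
  - nra.
Qed.

Lemma IVT_le (f : R -> R) a b y : continuity f -> a <= b -> f a <= y <= f b ->
  exists z, a <= z <= b /\ f z = y.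
Proof.
  intros Hc Hab Hy.
  destruct (IVT_gen f a b y Hc) as [z [Hz1 Hz2]].
  - rewrite Rmin_left, Rmax_right by lra. exact Hy.
  - exists z. rewrite Rmin_left, Rmax_right in Hz1 by lra. auto.
Qed.

Lemma k2rel_unique y : 5 < y -> exists! z, k2rel y z.
Proof.
  intros Hy. pose proof (Rmax_l 3 y). pose proof (Rmax_r 3 y).
  pose proof (P_ge_3id (Rmax 3 y) ltac:(lra)).
  destruct (IVT_le P (5/2) (Rmax 3 y) y P_continuous ltac:(lra) ltac:(split; [unfold P; lra|lra])) as [z [Hz Pz]].
  assert (Hz' : 5/2 < z)
    by (destruct (Req_dec z (5/2)) as [E|]; [rewrite E in Pz; unfold P in Pz; lra|lra]).
  exists z. split; [split; auto|].
  intros w [Hw Pw]. destruct (Rtotal_order z w) as [Hlt|[Heq|Hgt]]; auto.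
  - pose proof (P_lt_ge2 z w ltac:(lra) Hlt). lra.
  - pose proof (P_lt_ge2 w z ltac:(lra) Hgt). lra.
Qed.

Lemma k2set_unique_low y : 0 <= y < 4 -> exists! z, k2set y z.
Proof.
  intros Hy. destruct (IVT_le P 0 (1/2) y P_continuous ltac:(lra) ltac:(unfold P; lra)) as [z [Hz Pz]].
  assert (Hz' : z < 1/2)
    by (destruct (Req_dec z (1/2)) as [E|]; [rewrite E in Pz; unfold P in Pz; lra|lra]).
  exists z. split; [split; [lra|auto]|].
  intros w [Hw Pw].
  assert (w < 1/2) by (destruct (Rlt_le_dec w (1/2)) as [|Hle]; [auto|pose proof (P_ge_4 w Hle); lra]).
  destruct (Rtotal_order z w) as [Hlt|[Heq|Hgt]]; auto.
  - pose proof (P_lt_01 z w ltac:(lra) Hlt ltac:(lra)). lra.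
  - pose proof (P_lt_01 w z ltac:(lra) Hgt ltac:(lra)). lra.
Qed.

Lemma k2set_unique_high y : 5 < y -> exists! z, k2set y z.
Proof.
  intros Hy. destruct (k2rel_unique y Hy) as [z [[Hz Pz] Hu]].
  exists z. split; [split; [lra|auto]|].
  intros w [Hw Pw]. apply Hu. split; auto.
  destruct (Rlt_le_dec (5/2) w) as [|Hle]; auto. pose proof (P_le_5 w Hle). lra.
Qed.

(* A cubic takes a value at most three times: two further roots force [2 (z + z_i + z1) = 9]. *)
Lemma P_preimage_at_most_3 z1 z2 z3 z y : z1 < z2 < z3 ->
  P z1 = y -> P z2 = y -> P z3 = y -> P z = y -> z = z1 \/ z = z2 \/ z = z3.
Proof.
  intros Ho H1 H2 H3 H.
  destruct (Req_dec z z1) as [|Hz1]; auto. destruct (Req_dec z z2) as [|Hz2]; auto. right; right.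
  assert (Hq : forall a, a <> z1 -> P a = y -> P_slope a z1 = 0).
  { intros a Ha Pa. pose proof (P_sub a z1). assert (Hm : (a - z1) * P_slope a z1 = 0) by lra.
    apply Rmult_integral in Hm. destruct Hm; [lra|auto]. }
  pose proof (Hq z Hz1 H). pose proof (Hq z2 ltac:(lra) H2). pose proof (Hq z3 ltac:(lra) H3).
  pose proof (P_slope_sub z z2 z1). pose proof (P_slope_sub z3 z2 z1).
  assert (E1 : 2 * (z + z2 + z1) - 9 = 0).
  { assert (Hm : (z - z2) * (2 * (z + z2 + z1) - 9) = 0) by lra.
    apply Rmult_integral in Hm. destruct Hm; [lra|auto]. }
  assert (E2 : 2 * (z3 + z2 + z1) - 9 = 0).
  { assert (Hm : (z3 - z2) * (2 * (z3 + z2 + z1) - 9) = 0) by lra.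
    apply Rmult_integral in Hm. destruct Hm; [lra|auto]. }
  lra.
Qed.

Lemma k2set_three y : 4 < y < 5 ->
  exists z1 z2 z3, z1 < z2 < z3 /\ forall z, k2set y z <-> (z = z1 \/ z = z2 \/ z = z3).
Proof.
  intros Hy.
  destruct (IVT_le P (1/2) 1 y P_continuous ltac:(lra) ltac:(unfold P; lra)) as [z1 [Hz1 P1]].
  destruct (IVT_le (fun z => - P z) 1 2 (- y) (continuity_opp _ P_continuous) ltac:(lra)
              ltac:(unfold P; lra)) as [z2 [Hz2 P2]].
  destruct (IVT_le P 2 (5/2) y P_continuous ltac:(lra) ltac:(unfold P; lra)) as [z3 [Hz3 P3]].
  assert (z1 < 1) by (destruct (Req_dec z1 1) as [E|]; [rewrite E in P1; unfold P in P1; lra|lra]).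
  assert (1 < z2) by (destruct (Req_dec z2 1) as [E|]; [rewrite E in P2; unfold P in P2; lra|lra]).
  assert (z2 < 2) by (destruct (Req_dec z2 2) as [E|]; [rewrite E in P2; unfold P in P2; lra|lra]).
  assert (2 < z3) by (destruct (Req_dec z3 2) as [E|]; [rewrite E in P3; unfold P in P3; lra|lra]).
  exists z1, z2, z3. split; [lra|]. intros z. split.
  - intros [Hz Pz]. apply (P_preimage_at_most_3 z1 z2 z3 z y); auto; lra.
  - intros [-> | [-> | ->]]; split; lra.
Qed.

Lemma k2set_4 z : k2set 4 z <-> (z = 1/2 \/ z = 2).
Proof.
  split.
  - intros [Hz Pz]. pose proof (P_sub_four z). assert (Hm : (z - 2) ^ 2 * (2 * z - 1) = 0) by lra.
    apply Rmult_integral in Hm. destruct Hm; [right; nra|left; lra].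
  - intros [-> | ->]; split; unfold P; lra.
Qed.

Lemma k2set_5 z : k2set 5 z <-> (z = 1 \/ z = 5/2).
Proof.
  split.
  - intros [Hz Pz]. pose proof (five_sub_P z). assert (Hm : (z - 1) ^ 2 * (5 - 2 * z) = 0) by lra.
    apply Rmult_integral in Hm. destruct Hm; [left; nra|right; lra].
  - intros [-> | ->]; split; unfold P; lra.
Qed.

(* On [5/2, +oo), [P] increases and [k1] decreases, so [P = k1] has at most one solution there;
   one exists in [5/2, 3] since [P (5/2) = 5 < k1 (5/2)] and [P 3 = 9 > 6 >= k1 3]. *)
Lemma P_eq_k1_unique : exists zbar, 5/2 < zbar <= 3 /\ P zbar = k1 zbar /\
  forall w, 5/2 <= w -> P w = k1 w -> w = zbar.
Proof.
  pose proof (inv_1_sqr_pos (5/2)). pose proof (inv_1_sqr_le_1 3).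
  destruct (IVT_le (fun w => P w - k1 w) (5/2) 3 0 (continuity_minus _ _ P_continuous k1_continuous)
              ltac:(lra) ltac:(unfold P, k1; lra)) as [zb [Hz Pz]].
  assert (Hzb : 5/2 < zb)
    by (destruct (Req_dec zb (5/2)) as [E|]; [rewrite E in Pz; unfold P, k1 in Pz; lra|lra]).
  exists zb. split; [lra|]. split; [lra|].
  intros w Hw Pw. destruct (Rtotal_order w zb) as [Hlt|[Heq|Hgt]]; auto.
  - pose proof (P_lt_ge2 w zb ltac:(lra) Hlt). pose proof (k1_lt w zb ltac:(lra) Hlt). lra.
  - pose proof (P_lt_ge2 zb w ltac:(lra) Hgt). pose proof (k1_lt zb w ltac:(lra) Hgt). lra.
Qed.

(** * Bounds and convergence of trajectories *)

(* An invariant box [0, x_bound x0] * [0, z_bound x0 z0] for the trajectory from [(x0, z0)]: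
   on its upper faces [x' <= 6 - x <= 0] and [z' <= x - 3 z < 0] since [P z >= 3 z] for [z >= 3]. *)
Definition x_bound (x0 : R) : R := Rmax x0 6.
Definition z_bound (x0 z0 : R) : R := z0 + x_bound x0 + 3.

Lemma x_bound_ge x0 : x0 <= x_bound x0 /\ 6 <= x_bound x0.
Proof. split; [apply Rmax_l|apply Rmax_r]. Qed.

(* Where [P_slope z zbar >= 1] the [z]-equation is contracting enough to dominate the coupling
   through [1/(1+z^2)], whose slope is at most 1. *)
Lemma lyapunov_decrease x z xbar zbar : 5/2 < zbar <= 3 -> xbar = k1 zbar -> P zbar = xbar ->
  11/5 <= z ->
  2 * (x - xbar) * fx x z + 2 * (z - zbar) * fz x z <= - ((x - xbar) ^ 2 + (z - zbar) ^ 2).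
Proof.
  intros Hzb Hxb Pzb Hz.
  destruct (inv_1_sqr_sub z zbar ltac:(lra) ltac:(lra)) as [al [Hal Hdiff]].
  assert (HQ : 1 <= P_slope z zbar) by (unfold P_slope; nra).
  assert (Hfx : fx x z = - (x - xbar) - al * (z - zbar)) by (unfold fx; rewrite Hxb; unfold k1; lra).
  assert (Hfz : fz x z = - (z - zbar) * P_slope z zbar + (x - xbar))
    by (unfold fz; pose proof (P_sub z zbar); lra).
  rewrite Hfx, Hfz. set (u := x - xbar). set (v := z - zbar).
  assert (0 <= (u - (1 - al) * v) ^ 2) by apply pow2_ge_0.
  assert (0 <= v ^ 2 * (2 * P_slope z zbar - 1 - (1 - al) ^ 2)) by (apply Rmult_le_pos; [apply pow2_ge_0|nra]).
  nra.
Qed.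

Section Trajectory.

Variables x z : R -> R.
Hypotheses (x0_ge0 : 0 <= x 0) (z0_ge0 : 0 <= z 0) (traj : is_traj x z).

Lemma traj_x_bounds t : 0 <= t -> 0 <= x t <= x_bound (x 0).
Proof.
  pose proof (x_bound_ge (x 0)).
  apply interval_invariant; [|lra].
  intros s Hs. exists (fx (x s) (z s)). split; [apply (traj s Hs)|].
  pose proof (inv_1_sqr_pos (z s)). pose proof (inv_1_sqr_le_1 (z s)). unfold fx. lra.
Qed.

Lemma traj_z_bounds t : 0 <= t -> 0 <= z t <= z_bound (x 0) (z 0).
Proof.
  pose proof (x_bound_ge (x 0)). unfold z_bound.
  apply interval_invariant; [|lra].
  intros s Hs. exists (fz (x s) (z s)). split; [apply (traj s Hs)|].
  pose proof (traj_x_bounds s Hs). unfold fz. split.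
  - intros Hl. pose proof (P_lt_0 _ Hl). lra.
  - intros Hl. pose proof (P_ge_3id (z s) ltac:(lra)). lra.
Qed.

(* While [z <= 5/2] we have [P z <= 5], whereas [x] eventually exceeds [5] by a margin
   [1/(1 + z_bound^2)], so [z] climbs past [11/5] at a positive rate. *)
Lemma traj_z_eventually_ge : exists T, 0 <= T /\ forall t, T <= t -> 11/5 <= z t.
Proof.
  set (dl := / (1 + z_bound (x 0) (z 0) ^ 2)).
  assert (Hdl : 0 < dl) by apply inv_1_sqr_pos.
  destruct (eventually_ge x 0 (5 + dl / 2) (dl / 2)) as [T1 [HT1 Hx]]; [lra| |].
  { intros s Hs. exists (fx (x s) (z s)). split; [apply (traj s Hs)|].
    intros Hl. unfold fx.
    assert (dl <= / (1 + z s ^ 2)).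
    { pose proof (traj_z_bounds s Hs). apply Rinv_le_contravar; [pose proof (pow2_ge_0 (z s)); lra|nra]. }
    lra. }
  destruct (eventually_ge z T1 (11/5) (dl / 2)) as [T2 [HT2 Hz]]; [lra| |].
  { intros s Hs. exists (fz (x s) (z s)). split; [apply (traj s ltac:(lra))|].
    intros Hl. pose proof (Hx s Hs). pose proof (P_le_5 (z s) ltac:(lra)). unfold fz. lra. }
  exists T2. split; [lra|exact Hz].
Qed.

Lemma traj_converges xbar zbar : 5/2 < zbar <= 3 -> xbar = k1 zbar -> P zbar = xbar ->
  is_lim x p_infty xbar /\ is_lim z p_infty zbar.
Proof.
  intros Hzb Hxb Pzb.
  destruct traj_z_eventually_ge as [T [HT0 HT]].
  set (V := fun s => (x s - xbar) ^ 2 + (z s - zbar) ^ 2).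
  assert (HV : forall eps, 0 < eps -> exists T', forall t, T' <= t -> V t <= eps).
  { intros eps He.
    destruct (eventually_ge (fun s => - V s) T (- eps) eps He) as [T' [_ HT']].
    - intros s Hs. destruct (traj s ltac:(lra)) as [Dx Dz].
      exists (- (2 * (x s - xbar) * fx (x s) (z s) + 2 * (z s - zbar) * fz (x s) (z s))).
      split.
      + apply (is_derive_opp V). apply (is_derive_plus (fun s => (x s - xbar) ^ 2));
          apply is_derive_sqr_sub; assumption.
      + intros Hl. pose proof (lyapunov_decrease (x s) (z s) xbar zbar Hzb Hxb Pzb (HT s Hs)).
        unfold V in Hl. lra.
    - exists T'. intros t Ht. specialize (HT' t Ht). lra. }
  assert (Hsq : forall a b eps, 0 < eps -> a ^ 2 + b ^ 2 <= eps ^ 2 / 2 -> Rabs a < eps).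
  { intros a b eps He Ha. pose proof (pow2_ge_0 b). rewrite <- (pow2_abs a) in Ha.
    pose proof (Rabs_pos a). nra. }
  split; apply is_lim_spec; intros eps; simpl; pose proof (cond_pos eps);
    destruct (HV (eps ^ 2 / 2) ltac:(nra)) as [T' HT']; exists T'; intros t Ht;
    specialize (HT' t ltac:(lra)); unfold V in HT'.
  - exact (Hsq _ _ eps ltac:(lra) HT').
  - rewrite Rplus_comm in HT'. exact (Hsq _ _ eps ltac:(lra) HT').
Qed.

End Trajectory.

(** * Global solutions of Lipschitz systems *)

Lemma ex_RInt_continuous_R (g : R -> R) a b : (forall t, continuous g t) -> ex_RInt g a b.
Proof. intros H. apply (ex_RInt_continuous (V := R_CompleteNormedModule)). intros; apply H. Qed.

Lemma abs_RInt_sub_le (h1 h2 w : R -> R) t : 0 <= t ->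
  (forall s, continuous h1 s) -> (forall s, continuous h2 s) -> (forall s, continuous w s) ->
  (forall s, 0 <= s <= t -> Rabs (h1 s - h2 s) <= w s) ->
  Rabs (RInt h1 0 t - RInt h2 0 t) <= RInt w 0 t.
Proof.
  intros Ht C1 C2 Cw Hb.
  assert (Ch : forall s, continuous (fun u => h1 u - h2 u) s)
    by (intros s; apply (continuous_minus h1 h2); auto).
  replace (RInt h1 0 t - RInt h2 0 t) with (RInt (fun u => h1 u - h2 u) 0 t)
    by (apply (RInt_minus h1 h2); apply ex_RInt_continuous_R; auto).
  apply Rabs_le. split.
  - replace (- RInt w 0 t) with (RInt (fun u => - w u) 0 t)
      by (apply (RInt_opp w); apply ex_RInt_continuous_R; auto).
    apply RInt_le; [lra| | |].
    + apply ex_RInt_continuous_R. intros s. apply (continuous_opp w), Cw.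
    + apply ex_RInt_continuous_R; auto.
    + intros s Hs. specialize (Hb s ltac:(lra)). apply Rabs_le_between in Hb. simpl. lra.
  - apply RInt_le; [lra|apply ex_RInt_continuous_R; auto|apply ex_RInt_continuous_R; auto|].
    intros s Hs. specialize (Hb s ltac:(lra)). apply Rabs_le_between in Hb. lra.
Qed.

Lemma RInt_lipschitz (g : R -> R) K a b : (forall t, continuous g t) -> (forall u, Rabs (g u) <= K) ->
  Rabs (RInt g 0 b - RInt g 0 a) <= K * Rabs (b - a).
Proof.
  intros Hc Hb. rewrite <- (RInt_Chasles g 0 a b) by (apply ex_RInt_continuous_R; auto).
  assert (Hpq : forall p q : R, plus p q - p = q) by (intros; unfold plus; simpl; ring).
  rewrite Hpq.
  destruct (Rle_lt_dec a b).
  - rewrite (Rabs_right (b - a)), Rmult_comm by lra.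
    apply abs_RInt_le_const; auto. apply ex_RInt_continuous_R; auto.
  - rewrite <- (opp_RInt_swap g b a) by (apply ex_RInt_continuous_R; auto).
    change (Rabs (- RInt g b a) <= K * Rabs (b - a)).
    rewrite Rabs_Ropp, (Rabs_left (b - a)), Rmult_comm by lra.
    replace (- (b - a)) with (a - b) by ring.
    apply abs_RInt_le_const; [lra|apply ex_RInt_continuous_R; auto|auto].
Qed.

Lemma RInt_scal_exp k c t : 0 < c -> RInt (fun s => k * exp (c * s)) 0 t = k * (exp (c * t) - 1) / c.
Proof.
  intros Hc. apply is_RInt_unique.
  replace (k * (exp (c * t) - 1) / c) with (minus (k * exp (c * t) / c) (k * exp (c * 0) / c))
    by (unfold minus, plus, opp; simpl; rewrite Rmult_0_r, exp_0; field; lra).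
  apply (is_RInt_derive (fun s => k * exp (c * s) / c)).
  - intros s _. auto_derive; auto. field. lra.
  - intros s _. apply ex_derive_continuous_R. auto_derive. auto.
Qed.

Lemma exp_le a b : a <= b -> exp a <= exp b.
Proof. intros [H|E]; [left; apply exp_increasing, H|rewrite E; lra]. Qed.

Lemma is_derive_const_add_RInt (g : R -> R) y0 t : (forall s, continuous g s) ->
  is_derive (fun b => y0 + RInt g 0 b) t (g t).
Proof.
  intros Hg.
  assert (H : is_derive (fun b => RInt g 0 b) t (g t)).
  { apply (is_derive_RInt g (fun b => RInt g 0 b) 0 t); [|apply Hg].
    exists (mkposreal 1 Rlt_0_1). intros y _.
    apply (RInt_correct (V := R_CompleteNormedModule)), ex_RInt_continuous_R, Hg. }
  pose proof (is_derive_plus (fun _ => y0) _ t _ _ (is_derive_const y0 t) H) as H1.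
  rewrite Rplus_0_l in H1. exact H1.
Qed.

Lemma geometric_eventually_lt C eps : 0 < eps -> exists N, forall n, (N <= n)%nat -> C * (/2) ^ n < eps.
Proof.
  intros He. assert (HC : 0 < Rabs C + 1) by (pose proof (Rabs_pos C); lra).
  destruct (pow_lt_1_zero (/2) ltac:(rewrite Rabs_right; lra) (eps / (Rabs C + 1))) as [N HN].
  { apply Rdiv_lt_0_compat; lra. }
  exists N. intros n Hn. specialize (HN n Hn).
  assert (Hp : 0 <= (/2) ^ n) by (apply pow_le; lra).
  rewrite Rabs_right in HN by lra. pose proof (Rle_abs C).
  apply Rle_lt_trans with ((Rabs C + 1) * (/2) ^ n); [nra|].
  replace eps with ((Rabs C + 1) * (eps / (Rabs C + 1))) by (field; lra).
  apply Rmult_lt_compat_l; lra.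
Qed.

Lemma le_geometric_slack a b C : (forall n, a <= b + C * (/2) ^ n) -> a <= b.
Proof.
  intros H. destruct (Rle_lt_dec a b) as [|Hlt]; [assumption|exfalso].
  destruct (geometric_eventually_lt C (a - b) ltac:(lra)) as [N HN].
  specialize (HN N (Nat.le_refl N)). specialize (H N). lra.
Qed.

Lemma geometric_telescope (u : nat -> R) C : (forall n, Rabs (u (S n) - u n) <= C * (/2) ^ n) ->
  forall n m, (n <= m)%nat -> Rabs (u m - u n) <= 2 * C * (/2) ^ n.
Proof.
  intros H.
  assert (Hk : forall n k, Rabs (u (k + n)%nat - u n) <= 2 * C * ((/2) ^ n - (/2) ^ (k + n))).
  { intros n k. induction k as [|k IH].
    - simpl. unfold Rminus. rewrite !Rplus_opp_r, Rabs_R0. lra.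
    - replace (S k + n)%nat with (S (k + n)) by lia.
      replace (u (S (k + n)) - u n) with ((u (S (k + n)) - u (k + n)%nat) + (u (k + n)%nat - u n)) by ring.
      eapply Rle_trans; [apply Rabs_triang|].
      specialize (H (k + n)%nat). simpl. lra. }
  intros n m Hnm. replace m with ((m - n) + n)%nat by lia.
  eapply Rle_trans; [apply Hk|].
  assert (0 <= C) by (specialize (H O); pose proof (Rabs_pos (u 1%nat - u O)); simpl in H; lra).
  assert (0 <= (/2) ^ (m - n + n)) by (apply pow_le; lra). nra.
Qed.

Lemma geometric_cauchy_limit (u : nat -> R) C : (forall n, Rabs (u (S n) - u n) <= C * (/2) ^ n) ->
  forall n, Rabs (u n - real (Lim_seq u)) <= 2 * C * (/2) ^ n.
Proof.
  intros H. pose proof (geometric_telescope u C H) as Hb.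
  assert (Hex : ex_finite_lim_seq u).
  { apply ex_lim_seq_cauchy_corr. intros eps.
    destruct (geometric_eventually_lt (2 * C) eps (cond_pos eps)) as [N HN].
    exists N. intros n m Hn Hm. destruct (Compare_dec.le_dec n m).
    - rewrite Rabs_minus_sym. eapply Rle_lt_trans; [apply Hb; auto|]. apply HN; auto.
    - eapply Rle_lt_trans; [apply Hb; lia|]. apply HN; auto. }
  destruct Hex as [l Hl]. rewrite (is_lim_seq_unique _ _ Hl). simpl. intros n.
  assert (Hl' := proj1 (is_lim_seq_incr_n u n l) Hl).
  assert (H1 : Rbar_le (u n - 2 * C * (/2) ^ n) l).
  { apply (is_lim_seq_le (fun _ => u n - 2 * C * (/2) ^ n) (fun k => u (k + n)%nat));
      [|apply is_lim_seq_const|exact Hl'].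
    intros k. specialize (Hb n (k + n)%nat ltac:(lia)). apply Rabs_le_between in Hb. lra. }
  assert (H2 : Rbar_le l (u n + 2 * C * (/2) ^ n)).
  { apply (is_lim_seq_le (fun k => u (k + n)%nat) (fun _ => u n + 2 * C * (/2) ^ n));
      [|exact Hl'|apply is_lim_seq_const].
    intros k. specialize (Hb n (k + n)%nat ltac:(lia)). apply Rabs_le_between in Hb. lra. }
  simpl in H1, H2. apply Rabs_le. split; lra.
Qed.

Definition l1_dist (p q : R * R) : R := Rabs (fst p - fst q) + Rabs (snd p - snd q).

Lemma l1_dist_triangle p q r : l1_dist p r <= l1_dist p q + l1_dist q r.
Proof.
  unfold l1_dist.
  pose proof (Rabs_triang (fst p - fst q) (fst q - fst r)).
  pose proof (Rabs_triang (snd p - snd q) (snd q - snd r)).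
  replace (fst p - fst q + (fst q - fst r)) with (fst p - fst r) in * by ring.
  replace (snd p - snd q + (snd q - snd r)) with (snd p - snd r) in * by ring. lra.
Qed.

Lemma l1_dist_sym p q : l1_dist p q = l1_dist q p.
Proof. unfold l1_dist. rewrite (Rabs_minus_sym (fst p)), (Rabs_minus_sym (snd p)). reflexivity. Qed.

Definition lipschitz_bounded (L M : R) (H : R -> R -> R) : Prop :=
  (forall a b a' b', Rabs (H a b - H a' b') <= L * l1_dist (a, b) (a', b')) /\
  (forall a b, Rabs (H a b) <= M).

Lemma Rmax_0_lipschitz u v : Rabs (Rmax 0 u - Rmax 0 v) <= Rabs (u - v).
Proof. unfold Rmax. repeat destruct Rle_dec; split_Rabs; lra. Qed.

Section Picard.

Variables (F G : R -> R -> R) (L M x0 z0 : R).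
Hypotheses (L_ge0 : 0 <= L) (F_lb : lipschitz_bounded L M F) (G_lb : lipschitz_bounded L M G).

(* Evaluating at [Rmax 0 s] extends the integrands to all of [R], so only the values of the
   iterates on [0, +oo) matter. *)
Definition along (H : R -> R -> R) (f : R -> R * R) (s : R) : R :=
  H (fst (f (Rmax 0 s))) (snd (f (Rmax 0 s))).

Fixpoint picard (n : nat) : R -> R * R :=
  match n with
  | O => fun _ => (x0, z0)
  | S n => fun t => (x0 + RInt (along F (picard n)) 0 t, z0 + RInt (along G (picard n)) 0 t)
  end.

Definition time_lipschitz (f : R -> R * R) : Prop :=
  forall t s, 0 <= t -> 0 <= s -> l1_dist (f t) (f s) <= 2 * M * Rabs (t - s).

Lemma M_ge0 : 0 <= M.
Proof. destruct F_lb as [_ HM]. pose proof (Rabs_pos (F 0 0)). specialize (HM 0 0). lra. Qed.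

Lemma along_sub H f g s : lipschitz_bounded L M H ->
  Rabs (along H f s - along H g s) <= L * l1_dist (f (Rmax 0 s)) (g (Rmax 0 s)).
Proof. intros [HL _]. apply HL. Qed.

Lemma along_continuous H f : lipschitz_bounded L M H -> time_lipschitz f ->
  forall s, continuous (along H f) s.
Proof.
  intros [HL _] Hf. apply (lipschitz_continuous _ (L * (2 * M))). intros u v.
  eapply Rle_trans; [apply HL|]. change (l1_dist (_, _) (_, _)) with (l1_dist (f (Rmax 0 u)) (f (Rmax 0 v))).
  rewrite Rmult_assoc. apply Rmult_le_compat_l; [lra|].
  eapply Rle_trans; [apply Hf; apply Rmax_l|].
  pose proof M_ge0. apply Rmult_le_compat_l; [lra|apply Rmax_0_lipschitz].
Qed.

Lemma l1_dist_picard_S n m t s :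
  l1_dist (picard (S n) t) (picard (S m) s) =
  Rabs (RInt (along F (picard n)) 0 t - RInt (along F (picard m)) 0 s) +
  Rabs (RInt (along G (picard n)) 0 t - RInt (along G (picard m)) 0 s).
Proof. unfold l1_dist. simpl. f_equal; f_equal; ring. Qed.

Lemma along_bounded H f s : lipschitz_bounded L M H -> Rabs (along H f s) <= M.
Proof. intros [_ HM]. apply HM. Qed.

Lemma along_nonneg H f s : 0 <= s -> along H f s = H (fst (f s)) (snd (f s)).
Proof. intros Hs. unfold along. rewrite Rmax_right by lra. reflexivity. Qed.

Lemma picard_time_lipschitz n : time_lipschitz (picard n).
Proof.
  induction n as [|n IH]; intros t s _ _.
  - unfold l1_dist. simpl. unfold Rminus. rewrite !Rplus_opp_r, !Rabs_R0.
    pose proof M_ge0. pose proof (Rabs_pos (t + - s)). nra.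
  - rewrite l1_dist_picard_S.
    pose proof (RInt_lipschitz (along F (picard n)) M s t (along_continuous F _ F_lb IH)
                  (fun u => along_bounded F _ u F_lb)).
    pose proof (RInt_lipschitz (along G (picard n)) M s t (along_continuous G _ G_lb IH)
                  (fun u => along_bounded G _ u G_lb)).
    lra.
Qed.

(* The weight [exp (rate * t)] makes the Picard map a contraction of ratio [1/2]
   (a Bielecki-type norm), which is what allows a global existence time. *)
Definition rate : R := 4 * L + 1.

Lemma picard_step_0 t : 0 <= t -> l1_dist (picard 1 t) (picard 0 t) <= 2 * M * exp (rate * t).
Proof.
  intros Ht.
  assert (H0 : forall g : R -> R, RInt g 0 0 = 0) by (intros g; rewrite RInt_point; reflexivity).
  unfold l1_dist. simpl. rewrite !Rplus_minus_l.
  pose proof (RInt_lipschitz _ M 0 t (along_continuous F _ F_lb (picard_time_lipschitz O))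
                (fun u => along_bounded F _ u F_lb)) as HF.
  pose proof (RInt_lipschitz _ M 0 t (along_continuous G _ G_lb (picard_time_lipschitz O))
                (fun u => along_bounded G _ u G_lb)) as HG.
  rewrite !H0, !Rminus_0_r, (Rabs_right t) in HF, HG by lra. simpl in HF, HG.
  pose proof (exp_ineq1_le (rate * t)). pose proof M_ge0.
  assert (t <= exp (rate * t)) by (unfold rate in *; nra).
  assert (M * t <= M * exp (rate * t)) by (apply Rmult_le_compat_l; lra). lra.
Qed.

Lemma rate_contraction K t : 0 <= K ->
  2 * (L * K * (exp (rate * t) - 1) / rate) <= K * exp (rate * t) / 2.
Proof.
  intros HK. set (e := exp (rate * t)).
  assert (Hr : 0 < rate) by (unfold rate; lra). assert (He : 0 < e) by apply exp_pos.
  apply Rmult_le_reg_r with rate; [lra|].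
  replace (2 * (L * K * (e - 1) / rate) * rate) with (2 * L * K * (e - 1)) by (field; lra).
  assert (0 <= K * (L + e / 2)) by (apply Rmult_le_pos; lra).
  unfold rate. nra.
Qed.

Lemma picard_step n t : 0 <= t ->
  l1_dist (picard (S n) t) (picard n t) <= 2 * M * (/2) ^ n * exp (rate * t).
Proof.
  revert t. induction n as [|n IH]; intros t Ht.
  - rewrite pow_O, Rmult_1_r. apply picard_step_0, Ht.
  - set (K := 2 * M * (/2) ^ n).
    assert (HK : 0 <= K) by (apply Rmult_le_pos; [pose proof M_ge0; lra|apply pow_le; lra]).
    set (w := fun s => L * K * exp (rate * s)).
    assert (Cw : forall s, continuous w s)
      by (intros s; apply ex_derive_continuous_R; unfold w; auto_derive; auto).
    assert (HC : forall H, lipschitz_bounded L M H ->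
      Rabs (RInt (along H (picard (S n))) 0 t - RInt (along H (picard n)) 0 t) <= RInt w 0 t).
    { intros H HH. apply abs_RInt_sub_le; auto; try apply along_continuous; auto;
        try apply picard_time_lipschitz.
      intros s Hs. eapply Rle_trans; [apply along_sub, HH|].
      rewrite Rmax_right by lra. unfold w. rewrite Rmult_assoc.
      apply Rmult_le_compat_l; [lra|]. apply IH; lra. }
    rewrite l1_dist_picard_S. pose proof (HC F F_lb). pose proof (HC G G_lb).
    unfold w in *. rewrite RInt_scal_exp in * by (unfold rate; lra).
    pose proof (rate_contraction K t HK).
    replace (2 * M * (/2) ^ S n * exp (rate * t)) with (K * exp (rate * t) / 2) by (unfold K; simpl; field).
    lra.
Qed.

Definition picard_limit (t : R) : R * R :=
  (real (Lim_seq (fun n => fst (picard n t))), real (Lim_seq (fun n => snd (picard n t)))).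

Lemma picard_tail n t : 0 <= t ->
  l1_dist (picard n t) (picard_limit t) <= 8 * M * exp (rate * t) * (/2) ^ n.
Proof.
  intros Ht. set (C := 2 * M * exp (rate * t)).
  assert (Hstep : forall k, l1_dist (picard (S k) t) (picard k t) <= C * (/2) ^ k)
    by (intros k; replace (C * (/2) ^ k) with (2 * M * (/2) ^ k * exp (rate * t)) by (unfold C; ring);
        apply picard_step, Ht).
  pose proof (geometric_cauchy_limit (fun k => fst (picard k t)) C) as Hx.
  pose proof (geometric_cauchy_limit (fun k => snd (picard k t)) C) as Hz.
  unfold l1_dist in *. simpl.
  assert (Hxz : 2 * C * (/2) ^ n + 2 * C * (/2) ^ n = 8 * M * exp (rate * t) * (/2) ^ n)
    by (unfold C; ring).
  rewrite <- Hxz. apply Rplus_le_compat; [apply Hx|apply Hz]; intros k; specialize (Hstep k);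
    pose proof (Rabs_pos (fst (picard (S k) t) - fst (picard k t)));
    pose proof (Rabs_pos (snd (picard (S k) t) - snd (picard k t))); lra.
Qed.

Lemma picard_limit_time_lipschitz : time_lipschitz picard_limit.
Proof.
  intros t s Ht Hs.
  apply (le_geometric_slack _ _ (8 * M * exp (rate * t) + 8 * M * exp (rate * s))). intros n.
  pose proof (l1_dist_triangle (picard_limit t) (picard n t) (picard_limit s)).
  pose proof (l1_dist_triangle (picard n t) (picard n s) (picard_limit s)).
  pose proof (picard_time_lipschitz n t s Ht Hs).
  pose proof (picard_tail n t Ht). pose proof (picard_tail n s Hs).
  rewrite (l1_dist_sym (picard_limit t) (picard n t)) in H.
  replace ((8 * M * exp (rate * t) + 8 * M * exp (rate * s)) * (/2) ^ n)
    with (8 * M * exp (rate * t) * (/2) ^ n + 8 * M * exp (rate * s) * (/2) ^ n) by ring.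
  lra.
Qed.

Lemma picard_limit_integral H (u : nat -> R) y0 l t : lipschitz_bounded L M H -> 0 <= t ->
  (forall n, u (S n) = y0 + RInt (along H (picard n)) 0 t) ->
  (forall n, Rabs (u n - l) <= 8 * M * exp (rate * t) * (/2) ^ n) ->
  l = y0 + RInt (along H picard_limit) 0 t.
Proof.
  intros HH Ht Hu Hl. set (B := 8 * M * exp (rate * t)).
  assert (HB : 0 <= B) by (pose proof M_ge0; pose proof (exp_pos (rate * t)); unfold B; nra).
  assert (Hclose : forall n, Rabs (RInt (along H (picard n)) 0 t - RInt (along H picard_limit) 0 t)
                             <= t * (L * B * (/2) ^ n)).
  { intros n. eapply Rle_trans.
    - apply (abs_RInt_sub_le _ _ (fun _ => L * B * (/2) ^ n)); auto.
      + apply along_continuous, picard_time_lipschitz; auto.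
      + apply along_continuous, picard_limit_time_lipschitz; auto.
      + intros s. apply continuous_const.
      + intros s Hs. eapply Rle_trans; [apply along_sub, HH|]. rewrite Rmax_right by lra.
        rewrite !Rmult_assoc. apply Rmult_le_compat_l; [lra|].
        eapply Rle_trans; [apply picard_tail; lra|].
        assert (exp (rate * s) <= exp (rate * t))
          by (apply exp_le; unfold rate; nra).
        pose proof M_ge0. pose proof (pow_le (/2) n ltac:(lra)). unfold B.
        apply Rmult_le_compat_r; [lra|]. nra.
    - rewrite RInt_const. unfold scal; simpl; unfold mult; simpl. lra. }
  assert (Habs : Rabs (l - (y0 + RInt (along H picard_limit) 0 t)) <= 0).
  { apply (le_geometric_slack _ _ (B + t * (L * B))). intros n.
    specialize (Hclose n). specialize (Hl (S n)). rewrite Hu in Hl.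
    replace (l - (y0 + RInt (along H picard_limit) 0 t))
      with (- (y0 + RInt (along H (picard n)) 0 t - l)
            + (RInt (along H (picard n)) 0 t - RInt (along H picard_limit) 0 t)) by ring.
    eapply Rle_trans; [apply Rabs_triang|]. rewrite Rabs_Ropp.
    simpl pow in Hl. fold B in Hl. pose proof (pow_le (/2) n ltac:(lra)).
    assert (B * (/2 * (/2) ^ n) <= B * (/2) ^ n) by (apply Rmult_le_compat_l; lra).
    replace (0 + (B + t * (L * B)) * (/2) ^ n) with (B * (/2) ^ n + t * (L * B * (/2) ^ n)) by ring.
    lra. }
  pose proof (Rabs_pos (l - (y0 + RInt (along H picard_limit) 0 t))).
  assert (Rabs (l - (y0 + RInt (along H picard_limit) 0 t)) = 0) by lra.
  apply Rabs_eq_0 in H1. lra.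
Qed.

Theorem picard_global_solution : exists x z : R -> R, x 0 = x0 /\ z 0 = z0 /\
  forall t, 0 <= t -> is_derive x t (F (x t) (z t)) /\ is_derive z t (G (x t) (z t)).
Proof.
  set (x := fun t => x0 + RInt (along F picard_limit) 0 t).
  set (z := fun t => z0 + RInt (along G picard_limit) 0 t).
  assert (Hlim : forall t, 0 <= t -> picard_limit t = (x t, z t)).
  { intros t Ht. apply injective_projections; simpl.
    - apply (picard_limit_integral F (fun n => fst (picard n t))); auto.
      intros n. pose proof (picard_tail n t Ht). unfold l1_dist in *.
      pose proof (Rabs_pos (snd (picard n t) - snd (picard_limit t))). simpl in *. lra.
    - apply (picard_limit_integral G (fun n => snd (picard n t))); auto.
      intros n. pose proof (picard_tail n t Ht). unfold l1_dist in *.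
      pose proof (Rabs_pos (fst (picard n t) - fst (picard_limit t))). simpl in *. lra. }
  assert (H0 : forall g : R -> R, RInt g 0 0 = 0) by (intros g; rewrite RInt_point; reflexivity).
  exists x, z. unfold x at 1, z at 1. rewrite !H0, !Rplus_0_r. split; [reflexivity|split; [reflexivity|]].
  intros t Ht. pose proof picard_limit_time_lipschitz as Hl.
  replace (F (x t) (z t)) with (along F picard_limit t) by (rewrite along_nonneg, Hlim; auto).
  replace (G (x t) (z t)) with (along G picard_limit t) by (rewrite along_nonneg, Hlim; auto).
  split; [exact (is_derive_const_add_RInt _ x0 t (along_continuous F _ F_lb Hl))
         |exact (is_derive_const_add_RInt _ z0 t (along_continuous G _ G_lb Hl))].
Qed.

End Picard.

(** * Existence of trajectories *)

Definition clamp (lo hi v : R) : R := Rmax lo (Rmin hi v).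

Lemma clamp_range lo hi v : lo <= hi -> lo <= clamp lo hi v <= hi.
Proof. intros H. unfold clamp, Rmax, Rmin. repeat destruct Rle_dec; lra. Qed.

Lemma clamp_lipschitz lo hi v w : lo <= hi -> Rabs (clamp lo hi v - clamp lo hi w) <= Rabs (v - w).
Proof. intros H. unfold clamp, Rmax, Rmin. repeat destruct Rle_dec; split_Rabs; lra. Qed.

Lemma clamp_id lo hi v : lo <= v <= hi -> clamp lo hi v = v.
Proof. intros H. unfold clamp, Rmax, Rmin. repeat destruct Rle_dec; lra. Qed.

Lemma clamp_below lo hi v : lo <= hi -> v < lo -> clamp lo hi v = lo.
Proof. intros H H'. unfold clamp, Rmax, Rmin. repeat destruct Rle_dec; lra. Qed.

Lemma clamp_above lo hi v : lo <= hi -> hi < v -> clamp lo hi v = hi.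
Proof. intros H H'. unfold clamp, Rmax, Rmin. repeat destruct Rle_dec; lra. Qed.

Lemma P_slope_bound Z u w : 0 <= u <= Z -> 0 <= w <= Z ->
  Rabs (P_slope u w) <= 6 * Z ^ 2 + 18 * Z + 12.
Proof. intros Hu Hw. unfold P_slope. apply Rabs_le. split; nra. Qed.

Lemma P_bound Z c : 0 <= c <= Z -> 0 <= P c <= Z * (2 * Z ^ 2 + 9 * Z + 12).
Proof.
  intros Hc. unfold P.
  assert (0 < 2 * c ^ 2 - 9 * c + 12) by (pose proof (pow2_ge_0 (c - 9/4)); nra).
  split; [apply Rmult_le_pos; lra|].
  apply Rmult_le_compat; nra.
Qed.

Section BoxedSystem.

Variables x0 z0 : R.
Hypotheses (x0_ge0 : 0 <= x0) (z0_ge0 : 0 <= z0).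

Let X := x_bound x0.
Let Z := z_bound x0 z0.

Lemma X_ge6 : 6 <= X.
Proof. apply x_bound_ge. Qed.

Lemma Z_eq : Z = z0 + X + 3.
Proof. reflexivity. Qed.

(* The vector field frozen outside the invariant box: globally Lipschitz and bounded, and equal
   to [(fx, fz)] inside the box. *)
Definition fx_box (a b : R) : R := fx (clamp 0 X a) (clamp 0 Z b).
Definition fz_box (a b : R) : R := fz (clamp 0 X a) (clamp 0 Z b).

Definition box_L : R := 1 + (6 * Z ^ 2 + 18 * Z + 12).
Definition box_M : R := X + 6 + Z * (2 * Z ^ 2 + 9 * Z + 12).

Lemma clamp_X_range a : 0 <= clamp 0 X a <= X.
Proof. apply clamp_range. pose proof X_ge6. lra. Qed.

Lemma clamp_Z_range b : 0 <= clamp 0 Z b <= Z.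
Proof. apply clamp_range. pose proof X_ge6. pose proof Z_eq. lra. Qed.

Lemma fx_box_lipschitz_bounded : lipschitz_bounded box_L box_M fx_box.
Proof.
  pose proof X_ge6. pose proof Z_eq. split.
  - intros a b a' b'. unfold fx_box, fx, box_L.
    change (l1_dist (a, b) (a', b')) with (Rabs (a - a') + Rabs (b - b')).
    pose proof (clamp_lipschitz 0 X a a' ltac:(lra)).
    pose proof (clamp_lipschitz 0 Z b b' ltac:(lra)).
    pose proof (clamp_Z_range b). pose proof (clamp_Z_range b').
    pose proof (inv_1_sqr_lipschitz (clamp 0 Z b) (clamp 0 Z b') ltac:(lra) ltac:(lra)).
    replace (- clamp 0 X a + 5 + / (1 + clamp 0 Z b ^ 2) - (- clamp 0 X a' + 5 + / (1 + clamp 0 Z b' ^ 2)))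
      with (- (clamp 0 X a - clamp 0 X a') + (/ (1 + clamp 0 Z b ^ 2) - / (1 + clamp 0 Z b' ^ 2))) by ring.
    eapply Rle_trans; [apply Rabs_triang|]. rewrite Rabs_Ropp.
    pose proof (Rabs_pos (a - a')). pose proof (Rabs_pos (b - b')).
    assert (0 <= (6 * Z ^ 2 + 18 * Z + 12) * (Rabs (a - a') + Rabs (b - b')))
      by (apply Rmult_le_pos; nra).
    lra.
  - intros a b. unfold fx_box, fx, box_M.
    pose proof (clamp_X_range a). pose proof (inv_1_sqr_pos (clamp 0 Z b)).
    pose proof (inv_1_sqr_le_1 (clamp 0 Z b)).
    assert (0 <= Z * (2 * Z ^ 2 + 9 * Z + 12)) by nra.
    apply Rabs_le; split; lra.
Qed.

Lemma fz_box_lipschitz_bounded : lipschitz_bounded box_L box_M fz_box.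
Proof.
  pose proof X_ge6. pose proof Z_eq. split.
  - intros a b a' b'. unfold fz_box, fz, box_L.
    change (l1_dist (a, b) (a', b')) with (Rabs (a - a') + Rabs (b - b')).
    set (u := clamp 0 Z b). set (u' := clamp 0 Z b'). set (c := 6 * Z ^ 2 + 18 * Z + 12).
    pose proof (clamp_lipschitz 0 X a a' ltac:(lra)).
    pose proof (clamp_lipschitz 0 Z b b' ltac:(lra)).
    pose proof (P_slope_bound Z u u' (clamp_Z_range b) (clamp_Z_range b')).
    replace (- P u + clamp 0 X a - (- P u' + clamp 0 X a'))
      with (- ((u - u') * P_slope u u') + (clamp 0 X a - clamp 0 X a')) by (rewrite <- P_sub; ring).
    eapply Rle_trans; [apply Rabs_triang|]. rewrite Rabs_Ropp, Rabs_mult.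
    assert (Rabs (u - u') * Rabs (P_slope u u') <= Rabs (b - b') * c)
      by (apply Rmult_le_compat; auto using Rabs_pos).
    assert (0 <= c) by (unfold c; nra).
    pose proof (Rabs_pos (a - a')). pose proof (Rabs_pos (b - b')).
    assert (0 <= c * Rabs (a - a')) by (apply Rmult_le_pos; lra). nra.
  - intros a b. unfold fz_box, fz, box_M.
    pose proof (clamp_X_range a). pose proof (P_bound Z _ (clamp_Z_range b)).
    apply Rabs_le; split; lra.
Qed.

Lemma exists_traj : exists x z : R -> R, x 0 = x0 /\ z 0 = z0 /\ is_traj x z.
Proof.
  pose proof X_ge6. pose proof Z_eq.
  assert (L_ge0 : 0 <= box_L) by (unfold box_L; nra).
  destruct (picard_global_solution fx_box fz_box box_L box_M x0 z0 L_ge0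
              fx_box_lipschitz_bounded fz_box_lipschitz_bounded) as [x [z [Hx0 [Hz0 Hd]]]].
  assert (Hx : forall t, 0 <= t -> 0 <= x t <= X).
  { apply interval_invariant; [|rewrite Hx0; assert (x0 <= X) by apply x_bound_ge; lra].
    intros t Ht. exists (fx_box (x t) (z t)). split; [apply Hd, Ht|].
    unfold fx_box, fx. pose proof (inv_1_sqr_pos (clamp 0 Z (z t))).
    pose proof (inv_1_sqr_le_1 (clamp 0 Z (z t))). split; intros Hl.
    - rewrite clamp_below by lra. lra.
    - rewrite clamp_above by lra. lra. }
  assert (Hz : forall t, 0 <= t -> 0 <= z t <= Z).
  { apply interval_invariant; [|rewrite Hz0; lra].
    intros t Ht. exists (fz_box (x t) (z t)). split; [apply Hd, Ht|].
    unfold fz_box, fz. pose proof (clamp_X_range (x t)). split; intros Hl.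
    - rewrite clamp_below by lra. unfold P. lra.
    - rewrite clamp_above by lra. pose proof (P_ge_3id Z ltac:(lra)). lra. }
  exists x, z. split; [exact Hx0|split; [exact Hz0|]].
  intros t Ht. destruct (Hd t Ht) as [Dx Dz].
  unfold fx_box, fz_box in Dx, Dz. rewrite !clamp_id in Dx, Dz by auto. auto.
Qed.

End BoxedSystem.

Lemma equilibrium_iff zbar a b : 5/2 < zbar -> P zbar = k1 zbar ->
  (forall w, 5/2 <= w -> P w = k1 w -> w = zbar) ->
  fx a b = 0 /\ fz a b = 0 <-> a = k1 zbar /\ b = zbar.
Proof.
  intros Hzb Pzb Hu. split.
  - intros [Ex Ez]. unfold fx, fz in Ex, Ez.
    assert (Ha : a = k1 b) by (unfold k1; lra).
    assert (Hb : 5/2 < b).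
    { destruct (Rlt_le_dec (5/2) b) as [|Hle]; auto.
      pose proof (P_le_5 b Hle). pose proof (inv_1_sqr_pos b). unfold k1 in Ha. lra. }
    assert (b = zbar) by (apply Hu; lra). subst b. auto.
  - intros [-> ->]. split; [unfold fx, k1; lra|unfold fz; lra].
Qed.

Theorem mainTheorem5 :
  (forall x0 z0, 0 <= x0 -> 0 <= z0 ->
     exists x z : R -> R, x 0 = x0 /\ z 0 = z0 /\ is_traj x z)
  /\
  (forall y, 5 < y -> exists! z, k2rel y z)
  /\
  exists xbar zbar : R,
    5 / 2 < zbar /\ k2rel (k1 zbar) zbar /\
    (forall w, 5 / 2 <= w -> k2rel (k1 w) w -> w = zbar) /\
    xbar = k1 zbar /\
    (forall a b, 0 <= a -> 0 <= b ->
       (fx a b = 0 /\ fz a b = 0 <-> a = xbar /\ b = zbar)) /\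
    (forall x z : R -> R, 0 <= x 0 -> 0 <= z 0 -> is_traj x z ->
       (forall t, 0 <= t -> 0 <= x t /\ 0 <= z t) /\
       (exists M, forall t, 0 <= t -> Rabs (x t) <= M /\ Rabs (z t) <= M) /\
       is_lim x p_infty (Finite xbar) /\ is_lim z p_infty (Finite zbar))
  /\
  (forall y, (0 <= y < 4 \/ 5 < y) -> exists! z, k2set y z) /\
  (forall y, 4 < y < 5 ->
     exists z1 z2 z3, z1 < z2 < z3 /\
       forall z, k2set y z <-> (z = z1 \/ z = z2 \/ z = z3)) /\
  (forall z, k2set 4 z <-> (z = 1 / 2 \/ z = 2)) /\
  (forall z, k2set 5 z <-> (z = 1 \/ z = 5 / 2)).
Proof.
  destruct P_eq_k1_unique as [zb [Hzb [Pzb Hu]]].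
  split; [intros x0 z0; apply exists_traj|].
  split; [exact k2rel_unique|].
  exists (k1 zb), zb.
  split; [lra|]. split; [split; [lra|exact Pzb]|].
  split; [intros w Hw [_ Pw]; apply Hu; auto|]. split; [reflexivity|].
  split; [intros a b _ _; apply equilibrium_iff; auto; lra|].
  split.
  { intros x z Hx0 Hz0 Ht.
    pose proof (traj_x_bounds x z Hx0 Ht) as Bx. pose proof (traj_z_bounds x z Hx0 Hz0 Ht) as Bz.
    split; [intros t Hs; split; [apply Bx|apply Bz]; auto|].
    split; [|apply (traj_converges x z Hx0 Hz0 Ht); auto].
    exists (Rmax (x_bound (x 0)) (z_bound (x 0) (z 0))). intros t Hs.
    specialize (Bx t Hs). specialize (Bz t Hs).
    pose proof (Rmax_l (x_bound (x 0)) (z_bound (x 0) (z 0))).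
    pose proof (Rmax_r (x_bound (x 0)) (z_bound (x 0) (z 0))).
    rewrite !Rabs_right by lra. lra. }
  split; [intros y [Hy|Hy]; [apply k2set_unique_low|apply k2set_unique_high]; auto|].
  split; [exact k2set_three|].
  split; [exact k2set_4|exact k2set_5].
Qed.
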